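(* Let $0<\varepsilon_1<\varepsilon_2<1/2$. Then $\varepsilon_1<\phi(\varepsilon_1,\varepsilon_2)<\varepsilon_2$. Furthermore, let $\sigma\in[\varepsilon_1,\varepsilon_2]$ and let $p_1,p_2>0$ with $p_1+p_2\le1$. Then: 1. $(-p_2b_{\sigma,\varepsilon_2},\,p_1b_{\sigma,\varepsilon_1})=\big(-p_2(1-2\varepsilon_2)/(1-2\sigma),\,p_1\varepsilon_1/\sigma\big)$, and for every $x$ in this interval, $0<e_{\sigma,\varepsilon_1,p_1}(-x)<e_{\sigma,\varepsilon_2,p_2}(x)<1/2$. 2. If $\sigma\le\phi(\varepsilon_1,\varepsilon_2)$, then $F_{\sigma,\varepsilon_1,p_1,\varepsilon_2,p_2}$ is (strictly) decreasing on $(-p_2b_{\sigma,\varepsilon_2},0]$. 3. If $\sigma\ge\phi(\varepsilon_1,\varepsilon_2)$, then $F_{\sigma,\varepsilon_1,p_1,\varepsilon_2,p_2}$ is (strictly) increasing on $[0,p_1b_{\sigma,\varepsilon_1})$.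
   Context: Notation: $\overline a=1-a$; $\log$ is base 2. $f_c(t)=1+t\log t+\overline t\log\overline t$ for $t\in[0,1]$ (with $0\log0=0$). For $0<\varepsilon_1<\varepsilon_2<1/2$, $$\phi(\varepsilon_1,\varepsilon_2)=\frac{\ln(\overline{\varepsilon_1}/\overline{\varepsilon_2})}{\ln\big((\overline{\varepsilon_1}\varepsilon_2)/(\overline{\varepsilon_2}\varepsilon_1)\big)}.$$ For $\sigma\in(0,1/2)$ and $\varepsilon\in(0,1/2)$, $b_{\sigma,\varepsilon}=\min\{1,\varepsilon/\sigma,(1-2\varepsilon)/(1-2\sigma)\}$. For $p\in(0,1)$ and $x\in(-pb_{\sigma,\varepsilon},1-p)$, $e_{\sigma,\varepsilon,p}(x)=(p\varepsilon+x\sigma)/(p+x)$ and $f_{\sigma,\varepsilon,p}(x)=(p+x)f_c(e_{\sigma,\varepsilon,p}(x))$. For $\sigma$, $\varepsilon_1<\varepsilon_2$, $p_1,p_2$ as in the claim, $F_{\sigma,\varepsilon_1,p_1,\varepsilon_2,p_2}(x)=f_{\sigma,\varepsilon_1,p_1}(-x)+f_{\sigma,\varepsilon_2,p_2}(x)$ for $x\in(-p_2b_{\sigma,\varepsilon_2},p_1b_{\sigma,\varepsilon_1})$. *)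

From Stdlib Require Import Reals.
Open Scope R_scope.

Definition log2 (t : R) : R := ln t / ln 2.

Definition xlog2x (t : R) : R := if Req_EM_T t 0 then 0 else t * log2 t.

Definition f_c (t : R) : R := 1 + xlog2x t + xlog2x (1 - t).

Definition phi (e1 e2 : R) : R :=
  ln ((1 - e1) / (1 - e2)) / ln (((1 - e1) * e2) / ((1 - e2) * e1)).

Definition b_se (s e : R) : R := Rmin 1 (Rmin (e / s) ((1 - 2 * e) / (1 - 2 * s))).

Definition e_sep (s e p x : R) : R := (p * e + x * s) / (p + x).

Definition f_sep (s e p x : R) : R := (p + x) * f_c (e_sep s e p x).

Definition F_big (s e1 p1 e2 p2 x : R) : R := f_sep s e1 p1 (- x) + f_sep s e2 p2 x.

From Stdlib Require Import Reals Lra Psatz.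
From Coquelicot Require Import Coquelicot.
Open Scope R_scope.

(* Write f_{s,e,p}(x) = P f_c(N/P) with P = p + x and N = p e + x s.  By homogeneity its
   derivative is 1 + L_s(e_{s,e,p}(x)) / ln 2, where L_s(t) = s ln t + (1-s) ln (1-t)
   ([loglik]) increases on (0, s] and decreases on [s, 1) by Gibbs' inequality.  Hence
   F' = (L_s(e_2(x)) - L_s(e_1(-x))) / ln 2.  On the window e_1(-x) <= s <= e_2(x); for
   x < 0 the points e_1(-x), e_2(x) lie in [e1, s] and (e2, 1), so F' < (L_s(e2) - L_s(e1)) / ln 2,
   and for x > 0 they lie in (0, e1) and [s, e2], so F' > (L_s(e2) - L_s(e1)) / ln 2.  Finally
   L_s(e2) - L_s(e1) = (s - phi(e1,e2)) ln(((1-e1) e2) / ((1-e2) e1)) has the sign of s - phi;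
   at s = e1 and s = e2 this identity also gives e1 < phi < e2. *)

Lemma ln_lt_sub1 t : 0 < t -> t <> 1 -> ln t < t - 1.
Proof.
  intros ht ht1.
  assert (hl : ln t <> 0) by (apply ln_neq_0; assumption).
  pose proof (exp_ineq1 _ hl) as h. rewrite exp_ln in h by exact ht. lra.
Qed.

Lemma ln_le_sub1 t : 0 < t -> ln t <= t - 1.
Proof.
  intros ht. pose proof (exp_ineq1_le (ln t)) as h. rewrite exp_ln in h by exact ht. lra.
Qed.

Definition loglik (s t : R) : R := s * ln t + (1 - s) * ln (1 - t).

Lemma loglik_lt_increasing s a b : 0 < a -> a < b -> b <= s -> s < 1 ->
  loglik s a < loglik s b.
Proof.
  intros ha hab hbs hs1. unfold loglik.
  set (u := a / b). set (v := (1 - a) / (1 - b)).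
  assert (hu : u * b = a) by (unfold u; field; lra).
  assert (hv : v * (1 - b) = 1 - a) by (unfold v; field; lra).
  assert (hu1 : u < 1) by nra.
  assert (h1 : ln a - ln b < u - 1).
  { rewrite <- ln_div by lra. fold u. apply ln_lt_sub1; [|lra].
    apply Rdiv_lt_0_compat; lra. }
  assert (h2 : ln (1 - a) - ln (1 - b) <= v - 1).
  { rewrite <- ln_div by lra. apply ln_le_sub1, Rdiv_lt_0_compat; lra. }
  assert (hkey : s * (u - 1) + (1 - s) * (v - 1) <= 0) by nra.
  assert (s * (ln a - ln b) < s * (u - 1)) by (apply Rmult_lt_compat_l; lra).
  assert ((1 - s) * (ln (1 - a) - ln (1 - b)) <= (1 - s) * (v - 1))
    by (apply Rmult_le_compat_l; lra).
  lra.
Qed.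

Lemma loglik_compl s t : loglik s t = loglik (1 - s) (1 - t).
Proof. unfold loglik. replace (1 - (1 - t)) with t by ring. ring. Qed.

Lemma loglik_lt_decreasing s a b : 0 < s -> s <= a -> a < b -> b < 1 ->
  loglik s b < loglik s a.
Proof.
  intros. rewrite (loglik_compl s a), (loglik_compl s b).
  apply loglik_lt_increasing; lra.
Qed.

Lemma loglik_le_increasing s a b : 0 < a -> a <= b -> b <= s -> s < 1 ->
  loglik s a <= loglik s b.
Proof.
  intros. destruct (Req_dec a b) as [<-|]; [lra|].
  left; apply loglik_lt_increasing; lra.
Qed.

Lemma loglik_le_decreasing s a b : 0 < s -> s <= a -> a <= b -> b < 1 ->
  loglik s b <= loglik s a.
Proof.
  intros. destruct (Req_dec a b) as [<-|]; [lra|].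
  left; apply loglik_lt_decreasing; lra.
Qed.

Lemma phi_den_pos e1 e2 : 0 < e1 -> e1 < e2 -> e2 < 1 ->
  0 < ln (((1 - e1) * e2) / ((1 - e2) * e1)).
Proof.
  intros. rewrite <- ln_1. apply ln_increasing; [lra|].
  apply Rmult_lt_reg_r with ((1 - e2) * e1); [nra|].
  unfold Rdiv; rewrite Rmult_assoc, Rinv_l by nra. nra.
Qed.

Lemma loglik_sub_phi e1 e2 s : 0 < e1 -> e1 < e2 -> e2 < 1 ->
  loglik s e2 - loglik s e1 = (s - phi e1 e2) * ln (((1 - e1) * e2) / ((1 - e2) * e1)).
Proof.
  intros. pose proof (phi_den_pos e1 e2) as hd.
  unfold phi, loglik. field_simplify; [|lra].
  rewrite !ln_div, !ln_mult by nra. ring.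
Qed.

Lemma phi_bounds e1 e2 : 0 < e1 -> e1 < e2 -> e2 < 1/2 -> e1 < phi e1 e2 < e2.
Proof.
  intros. pose proof (phi_den_pos e1 e2) as hd.
  pose proof (loglik_sub_phi e1 e2 e1) as h1.
  pose proof (loglik_sub_phi e1 e2 e2) as h2.
  pose proof (loglik_lt_decreasing e1 e1 e2) as g1.
  pose proof (loglik_lt_increasing e2 e1 e2) as g2.
  split; nra.
Qed.

Definition admissible (s e p x : R) : Prop := 0 < p * e + x * s < p + x.

(* [f_sep] on [admissible] points, without the [0 log 0] case split, so that
   [auto_derive] applies. *)
Definition f_sep_ln (s e p x : R) : R :=
  (p + x) + ((p * e + x * s) * ln (p * e + x * s)
             + ((p + x) - (p * e + x * s)) * ln ((p + x) - (p * e + x * s))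
             - (p + x) * ln (p + x)) / ln 2.

Lemma ln2_pos : 0 < ln 2.
Proof. rewrite <- ln_1. apply ln_increasing; lra. Qed.

Lemma f_sep_eq_ln s e p x : admissible s e p x -> f_sep s e p x = f_sep_ln s e p x.
Proof.
  intros [hN hM]. pose proof ln2_pos.
  unfold f_sep, f_c, xlog2x, log2, e_sep, f_sep_ln.
  set (N := p * e + x * s) in *. set (P := p + x) in *.
  assert (h1 : 1 - N / P = (P - N) / P) by (field; lra).
  assert (0 < N / P) by (apply Rdiv_lt_0_compat; lra).
  assert (0 < (P - N) / P) by (apply Rdiv_lt_0_compat; lra).
  rewrite h1. do 2 (destruct Req_EM_T; [lra|]).
  rewrite !ln_div by lra. field. lra.
Qed.

Lemma is_derive_f_sep_ln s e p x : admissible s e p x ->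
  is_derive (f_sep_ln s e p) x (1 + loglik s (e_sep s e p x) / ln 2).
Proof.
  intros [hN hM]. pose proof ln2_pos.
  unfold f_sep_ln, loglik, e_sep.
  auto_derive; [repeat split; lra|].
  replace (1 - (p * e + x * s) / (p + x)) with ((p + x - (p * e + x * s)) / (p + x))
    by (field; lra).
  rewrite !ln_div by lra. unfold Rminus. field. lra.
Qed.

Lemma open_admissible s e p : open (admissible s e p).
Proof.
  assert (hpos : forall a b, open (fun x => 0 < a + x * b)).
  { intros a b. apply (open_comp (fun x => a + x * b) (fun t => 0 < t)); [|apply open_gt].
    intros y _. apply (proj1 (continuity_pt_filterlim (fun x => a + x * b) y)). reg. }
  apply open_and; [apply hpos|].
  apply (open_ext (fun x => 0 < (p - p * e) + x * (1 - s))); [intros x; split; lra|apply hpos].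
Qed.

Lemma is_derive_f_sep s e p x : admissible s e p x ->
  is_derive (f_sep s e p) x (1 + loglik s (e_sep s e p x) / ln 2).
Proof.
  intros hx.
  apply is_derive_ext_loc with (f := f_sep_ln s e p); [|now apply is_derive_f_sep_ln].
  apply (filter_imp (admissible s e p)); [|exact (open_admissible s e p x hx)].
  intros y hy. symmetry. now apply f_sep_eq_ln.
Qed.

Lemma is_derive_F_big s e1 p1 e2 p2 x :
  admissible s e1 p1 (- x) -> admissible s e2 p2 x ->
  is_derive (F_big s e1 p1 e2 p2) x
    ((loglik s (e_sep s e2 p2 x) - loglik s (e_sep s e1 p1 (- x))) / ln 2).
Proof.
  intros h1 h2. pose proof ln2_pos.
  replace ((loglik s (e_sep s e2 p2 x) - loglik s (e_sep s e1 p1 (- x))) / ln 2)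
    with (-1 * (1 + loglik s (e_sep s e1 p1 (- x)) / ln 2)
          + (1 + loglik s (e_sep s e2 p2 x) / ln 2)) by (field; lra).
  apply (is_derive_plus (fun y => f_sep s e1 p1 (- y)) (f_sep s e2 p2)).
  - apply (is_derive_comp (f_sep s e1 p1) Ropp); [now apply is_derive_f_sep|].
    auto_derive; [exact I|ring].
  - now apply is_derive_f_sep.
Qed.

Lemma lt_of_is_derive_pos (f f' : R -> R) x y : x < y ->
  (forall c, x <= c <= y -> is_derive f c (f' c)) ->
  (forall c, x < c < y -> 0 < f' c) -> f x < f y.
Proof.
  intros hxy hd hpos.
  destruct (MVT_cor2 f f' x y hxy) as (c & hc & hcxy).
  { intros c hcxy. apply is_derive_Reals, hd, hcxy. }
  specialize (hpos c hcxy). nra.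
Qed.

Lemma lt_of_is_derive_neg (f f' : R -> R) x y : x < y ->
  (forall c, x <= c <= y -> is_derive f c (f' c)) ->
  (forall c, x < c < y -> f' c < 0) -> f y < f x.
Proof.
  intros hxy hd hneg.
  enough (- f x < - f y) by lra.
  apply (lt_of_is_derive_pos (fun t => - f t) (fun t => - f' t) x y hxy).
  - intros c hc. apply (is_derive_opp f), hd, hc.
  - intros c hc. specialize (hneg c hc). lra.
Qed.

Lemma e_sep_sub_e s e p x : 0 < p + x -> (e_sep s e p x - e) * (p + x) = x * (s - e).
Proof. intros. unfold e_sep. field. lra. Qed.

Lemma e_sep_sub_s s e p x : 0 < p + x -> (e_sep s e p x - s) * (p + x) = p * (e - s).
Proof. intros. unfold e_sep. field. lra. Qed.

Lemma b_se_of_le s e : 0 < s -> s <= e -> e < 1/2 -> b_se s e = (1 - 2 * e) / (1 - 2 * s).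
Proof.
  intros. unfold b_se.
  assert ((1 - 2 * e) / (1 - 2 * s) <= 1).
  { apply Rmult_le_reg_r with (1 - 2 * s); [lra|]. field_simplify; lra. }
  assert (1 <= e / s).
  { apply Rmult_le_reg_r with s; [lra|]. field_simplify; lra. }
  rewrite (Rmin_right (e / s)), Rmin_right; lra.
Qed.

Lemma b_se_of_ge s e : 0 < e -> e <= s -> s < 1/2 -> b_se s e = e / s.
Proof.
  intros. unfold b_se.
  assert (e / s <= 1).
  { apply Rmult_le_reg_r with s; [lra|]. field_simplify; lra. }
  assert (1 <= (1 - 2 * e) / (1 - 2 * s)).
  { apply Rmult_le_reg_r with (1 - 2 * s); [lra|]. field_simplify; lra. }
  rewrite (Rmin_left (e / s)), Rmin_right; lra.
Qed.

Section Window.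

Variables e1 e2 s p1 p2 : R.
Hypotheses (he1 : 0 < e1) (he12 : e1 < e2) (he2 : e2 < 1/2)
  (he1s : e1 <= s) (hse2 : s <= e2) (hp1 : 0 < p1) (hp2 : 0 < p2).

Lemma window_contains_zero : - p2 * b_se s e2 < 0 < p1 * b_se s e1.
Proof.
  rewrite b_se_of_le, b_se_of_ge by lra.
  assert (0 < (1 - 2 * e2) / (1 - 2 * s)) by (apply Rdiv_lt_0_compat; lra).
  assert (0 < e1 / s) by (apply Rdiv_lt_0_compat; lra).
  split; nra.
Qed.

Lemma window_bounds x : - p2 * b_se s e2 < x < p1 * b_se s e1 ->
  0 < p2 * (1 - 2 * e2) + x * (1 - 2 * s) /\ x * s < p1 * e1.
Proof.
  rewrite b_se_of_le, b_se_of_ge by lra. intros [hlo hhi]. split.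
  - apply Rmult_lt_compat_r with (r := 1 - 2 * s) in hlo; [|lra].
    replace (- p2 * ((1 - 2 * e2) / (1 - 2 * s)) * (1 - 2 * s))
      with (- p2 * (1 - 2 * e2)) in hlo by (field; lra). lra.
  - apply Rmult_lt_compat_r with (r := s) in hhi; [|lra].
    replace (p1 * (e1 / s) * s) with (p1 * e1) in hhi by (field; lra). lra.
Qed.

Lemma window_admissible x : - p2 * b_se s e2 < x < p1 * b_se s e1 ->
  admissible s e1 p1 (- x) /\ admissible s e2 p2 x.
Proof. intros hx. destruct (window_bounds x hx). unfold admissible. repeat split; nra. Qed.

Lemma window_e_sep x : - p2 * b_se s e2 < x < p1 * b_se s e1 ->
  e_sep s e1 p1 (- x) <= s <= e_sep s e2 p2 x.
Proof.
  intros hx. destruct (window_admissible x hx) as [h1 h2]. unfold admissible in *.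
  pose proof (e_sep_sub_s s e1 p1 (- x)) as c1.
  pose proof (e_sep_sub_s s e2 p2 x) as c2.
  split; nra.
Qed.

Lemma window_e_sep_order x : - p2 * b_se s e2 < x < p1 * b_se s e1 ->
  0 < e_sep s e1 p1 (- x) < e_sep s e2 p2 x /\ e_sep s e2 p2 x < 1/2.
Proof.
  intros hx. destruct (window_bounds x hx) as [blo bhi].
  destruct (window_admissible x hx) as [[a1 a2] [a3 a4]].
  pose proof (e_sep_sub_s s e1 p1 (- x) ltac:(lra)) as c1.
  pose proof (e_sep_sub_s s e2 p2 x ltac:(lra)) as c2.
  assert (half : (e_sep s e2 p2 x - 1/2) * (p2 + x) = - (p2 * (1 - 2 * e2) + x * (1 - 2 * s)) / 2)
    by (unfold e_sep; field; lra).
  split; [split|].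
  - unfold e_sep. apply Rdiv_lt_0_compat; lra.
  - destruct (window_e_sep x hx) as [m1 m2].
    destruct (Rlt_or_le s e2) as [hs2|hs2].
    + enough (s < e_sep s e2 p2 x) by lra.
      apply Rmult_lt_reg_r with (p2 + x); [lra|]. nra.
    + enough (e_sep s e1 p1 (- x) < s) by lra.
      apply Rmult_lt_reg_r with (p1 + - x); [lra|]. nra.
  - apply Rmult_lt_reg_r with (p2 + x); [lra|]. nra.
Qed.

Lemma window_slope_neg x : s <= phi e1 e2 -> - p2 * b_se s e2 < x < 0 ->
  loglik s (e_sep s e2 p2 x) < loglik s (e_sep s e1 p1 (- x)).
Proof.
  intros hphi hx.
  assert (hxw : - p2 * b_se s e2 < x < p1 * b_se s e1)
    by (pose proof window_contains_zero; lra).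
  destruct (window_admissible x hxw) as [[a1 a2] [a3 a4]].
  pose proof (phi_bounds e1 e2 he1 he12 he2) as hphi12.
  pose proof (e_sep_sub_e s e1 p1 (- x) ltac:(lra)) as d1.
  pose proof (e_sep_sub_e s e2 p2 x ltac:(lra)) as d2.
  pose proof (window_e_sep x hxw) as [m1 m2].
  assert (g1 : loglik s (e_sep s e2 p2 x) < loglik s e2).
  { apply loglik_lt_decreasing; try lra; [nra|].
    unfold e_sep. apply Rmult_lt_reg_r with (p2 + x); [lra|]. field_simplify; lra. }
  assert (g2 : loglik s e1 <= loglik s (e_sep s e1 p1 (- x)))
    by (apply loglik_le_increasing; try lra; nra).
  pose proof (loglik_sub_phi e1 e2 s he1 he12 ltac:(lra)) as g.
  pose proof (phi_den_pos e1 e2 he1 he12 ltac:(lra)).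
  nra.
Qed.

Lemma window_slope_pos x : phi e1 e2 <= s -> 0 < x < p1 * b_se s e1 ->
  loglik s (e_sep s e1 p1 (- x)) < loglik s (e_sep s e2 p2 x).
Proof.
  intros hphi hx.
  assert (hxw : - p2 * b_se s e2 < x < p1 * b_se s e1)
    by (pose proof window_contains_zero; lra).
  destruct (window_e_sep_order x hxw) as [[o1 _] _].
  destruct (window_admissible x hxw) as [[a1 a2] [a3 a4]].
  pose proof (phi_bounds e1 e2 he1 he12 he2) as hphi12.
  pose proof (e_sep_sub_e s e1 p1 (- x) ltac:(lra)) as d1.
  pose proof (e_sep_sub_e s e2 p2 x ltac:(lra)) as d2.
  pose proof (window_e_sep x hxw) as [m1 m2].
  assert (g1 : loglik s (e_sep s e1 p1 (- x)) < loglik s e1)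
    by (apply loglik_lt_increasing; try lra; nra).
  assert (g2 : loglik s e2 <= loglik s (e_sep s e2 p2 x))
    by (apply loglik_le_decreasing; try lra; nra).
  pose proof (loglik_sub_phi e1 e2 s he1 he12 ltac:(lra)) as g.
  pose proof (phi_den_pos e1 e2 he1 he12 ltac:(lra)).
  nra.
Qed.

End Window.

Theorem lemma7 (e1 e2 : R) (he1 : 0 < e1) (he12 : e1 < e2) (he2 : e2 < 1/2) :
  (e1 < phi e1 e2 < e2) /\
  (forall (s p1 p2 : R), e1 <= s <= e2 -> 0 < p1 -> 0 < p2 -> p1 + p2 <= 1 ->
     (* 1. *)
     ((- p2 * b_se s e2 = - p2 * (1 - 2 * e2) / (1 - 2 * s) /\
       p1 * b_se s e1 = p1 * e1 / s) /\
      (forall x, - p2 * b_se s e2 < x < p1 * b_se s e1 ->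
         0 < e_sep s e1 p1 (- x) /\
         e_sep s e1 p1 (- x) < e_sep s e2 p2 x /\
         e_sep s e2 p2 x < 1/2)) /\
     (* 2. *)
     (s <= phi e1 e2 ->
        forall x y, - p2 * b_se s e2 < x -> x < y -> y <= 0 ->
          F_big s e1 p1 e2 p2 y < F_big s e1 p1 e2 p2 x) /\
     (* 3. *)
     (phi e1 e2 <= s ->
        forall x y, 0 <= x -> x < y -> y < p1 * b_se s e1 ->
          F_big s e1 p1 e2 p2 x < F_big s e1 p1 e2 p2 y)).
Proof.
  split; [now apply phi_bounds|].
  intros s p1 p2 [he1s hse2] hp1 hp2 _.
  assert (hzero : - p2 * b_se s e2 < 0 < p1 * b_se s e1)
    by (apply window_contains_zero; assumption).
  pose proof ln2_pos.
  set (slope c := (loglik s (e_sep s e2 p2 c) - loglik s (e_sep s e1 p1 (- c))) / ln 2).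
  assert (hF : forall c, - p2 * b_se s e2 < c < p1 * b_se s e1 ->
    is_derive (F_big s e1 p1 e2 p2) c (slope c)).
  { intros c hc. edestruct (window_admissible e1 e2 s p1 p2) as [h1 h2]; try eassumption.
    now apply is_derive_F_big. }
  split; [split|split].
  - rewrite b_se_of_le, b_se_of_ge by lra. split; field; lra.
  - intros x hx. edestruct (window_e_sep_order e1 e2 s p1 p2) as [[o1 o2] o3]; try eassumption.
    auto.
  - intros hphi x y hx hxy hy. apply (lt_of_is_derive_neg _ slope x y hxy).
    + intros c hc. apply hF. lra.
    + intros c hc. apply Rdiv_neg_pos; [|lra].
      apply Rlt_minus, window_slope_neg; auto; lra.
  - intros hphi x y hx hxy hy. apply (lt_of_is_derive_pos _ slope x y hxy).
    + intros c hc. apply hF. lra.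
    + intros c hc. apply Rdiv_lt_0_compat; [|lra].
      apply Rlt_0_minus, window_slope_pos; auto; lra.
Qed.
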